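(* Let $\mathcal H$ be a hypergraph and $\mathcal A$ a sub-hypergraph of $\mathcal H$. Suppose that for any $\sigma,\sigma'\in\mathcal H$, either $\sigma\cap\sigma'=\emptyset$ or $\sigma\cap\sigma'\in\mathcal H$; and that for any $\tau\in\mathcal A$ and $\tau'\in\mathcal H\setminus\mathcal A$, $\tau\cap\tau'=\emptyset$. Then for each $n\ge0$, $$H_n(\mathcal H,\mathcal A)\oplus H_n(\mathcal H,\mathcal H\setminus\mathcal A)\cong H_n(\mathcal H).$$
   Context: A hypergraph is a finite set of nonempty finite subsets of a vertex set (hyperedges); an $n$-hyperedge has $n+1$ vertices. $\mathcal H\setminus\mathcal A=\{\sigma\in\mathcal H:\sigma\notin\mathcal A\}$. The associated simplicial complex is $\Delta\mathcal H=\{\sigma\ne\emptyset:\sigma\subseteq\tau\text{ for some }\tau\in\mathcal H\}$. Fix an abelian coefficient group $G$; chains are simplicial chains of $\Delta\mathcal H$ with coefficients in $G$ and boundary $\partial$; $G(\mathcal X)_n$ is the group of $G$-linear combinations of $n$-hyperedges of $\mathcal X$; $\mathrm{Inf}_n(\mathcal X)=G(\mathcal X)_n\cap\partial_n^{-1}(G(\mathcal X)_{n-1})$. Embedded homology $H_n(\mathcal H)=H_n(\mathrm{Inf}_*(\mathcal H))$; relative embedded homology $H_n(\mathcal H,\mathcal A)=H_n(\mathrm{Inf}_*(\mathcal H)/\mathrm{Inf}_*(\mathcal A))$. *)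

From HB Require Import structures.
From mathcomp Require Import all_boot all_order all_algebra.
Set Implicit Arguments. Unset Strict Implicit. Unset Printing Implicit Defensive.
Import GRing.Theory.
Local Open Scope ring_scope.

Section Hyper.
Variables (V : finType) (G : zmodType).

Definition hypergraph (H : {set {set V}}) : Prop := set0 \notin H.

(* Simplicial chains (all degrees at once): a G-valued function on simplices
   (finite nonempty subsets of V).  A chain of degree n is one supported on
   sets of cardinality n+1.  Orientation: vertices of a simplex are ordered
   by the fixed total order enum_rank of V. *)
Definition chain := {ffun {set V} -> G}.

(* sign (-1)^{position of v in t ∪ {v}} applied to x *)
Definition signed (v : V) (t : {set V}) (x : G) : G :=
  if odd #|[set w in t | (enum_rank w < enum_rank v)%N]| then - x else x.

(* Simplicial boundary:  ∂[v_0..v_n] = Σ_i (-1)^i [v_0..^v_i..v_n],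
   written dually: (∂c)(t) = Σ_{v∉t} (-1)^{pos(v)} c(t ∪ {v}) for t ≠ ∅
   (so that ∂ vanishes on 0-chains, no augmentation). *)
Definition bnd (c : chain) : chain :=
  [ffun t => if t == set0 then 0
             else \sum_(v | v \notin t) signed v t (c (v |: t))].

Definition hchain (X : {set {set V}}) (n : nat) (c : chain) : Prop :=
  forall s, c s != 0 -> s \in X /\ #|s| = n.+1.

(* Inf_n(X) = G(X)_n ∩ ∂_n^{-1}(G(X)_{n-1})  (G(X)_{-1} = 0; note ∂_0 = 0). *)
Definition Inf (X : {set {set V}}) (n : nat) (c : chain) : Prop :=
  hchain X n c /\ forall t, bnd c t != 0 -> t \in X /\ #|t| = n.

Definition cyc (H : {set {set V}}) (n : nat) (c : chain) : Prop :=
  Inf H n c /\ bnd c = 0.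
Definition bdry (H : {set {set V}}) (n : nat) (c : chain) : Prop :=
  exists d, Inf H n.+1 d /\ bnd d = c.

(* Relative embedded homology H_n(Inf_*(H)/Inf_*(A)), presented (third
   isomorphism theorem) as relative cycles modulo relative boundaries:
   cycles  = {c ∈ Inf_n(H) | ∂c ∈ Inf_{n-1}(A)},
   bounds  = ∂ Inf_{n+1}(H) + Inf_n(A). *)
Definition rcyc (H A : {set {set V}}) (n : nat) (c : chain) : Prop :=
  Inf H n c /\ Inf A n.-1 (bnd c).
Definition rbdry (H A : {set {set V}}) (n : nat) (c : chain) : Prop :=
  exists d e, Inf H n.+1 d /\ Inf A n e /\ c = bnd d + e.

End Hyper.

(* Group isomorphism of quotients Z1/B1 ≅ Z2/B2 (Z_i ⊇ B_i subgroups of the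
   zmodTypes U, W), given on representatives: a map f sending Z1 into Z2,
   well defined modulo B1/B2, additive modulo B2, with trivial kernel and
   surjective modulo B2. *)
Definition quot_iso (U W : zmodType) (Z1 B1 : U -> Prop) (Z2 B2 : W -> Prop)
  : Prop :=
  exists f : U -> W,
    [/\ forall x, Z1 x -> Z2 (f x),
        forall x y, Z1 x -> Z1 y -> B1 (x - y) -> B2 (f x - f y),
        forall x y, Z1 x -> Z1 y -> B2 (f (x + y) - (f x + f y)),
        forall x, Z1 x -> B2 (f x) -> B1 x
      & forall z, Z2 z -> exists2 x, Z1 x & B2 (f x - z)].

(* Direct sum of two quotients, as a quotient of the product group. *)
Definition psum (U1 U2 : zmodType) (P1 : U1 -> Prop) (P2 : U2 -> Prop)
  (p : (U1 * U2)%type) : Prop := P1 p.1 /\ P2 p.2.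

From mathcomp Require Import all_boot all_order all_algebra.
Set Implicit Arguments. Unset Strict Implicit. Unset Printing Implicit Defensive.
Import GRing.Theory.
Local Open Scope ring_scope.

(* Put B := H \ A.  The hypotheses say that H is the disjoint
   union of A and B and that no hyperedge of A meets a hyperedge of B; in
   particular a nonempty face of a hyperedge of A never lies in B and vice
   versa.  Hence restricting a chain to A (resp. B) preserves Inf_*(H),
   commutes with the boundary, and Inf_*(H) = Inf_*(A) ⊕ Inf_*(B) as chain
   complexes.  Consequently the B-part of a relative cycle of (H, A) is an
   absolute cycle, the B-part of a relative boundary is an absolute boundary,
   and conversely; symmetrically for (H, B).  The isomorphism
     H_n(H,A) ⊕ H_n(H,B) -> H_n(H),   (c1, c2) |-> c1|_B + c2|_A
   is then checked on representatives. *)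

Section Chains.
Variables (V : finType) (G : zmodType).
Implicit Types (c d e : chain V G) (X Y : {set {set V}}).

Definition res X c : chain V G := [ffun s => if s \in X then c s else 0].

Definition supported X c : Prop := forall s, c s != 0 -> s \in X.

Lemma resE X c s : res X c s = if s \in X then c s else 0.
Proof. by rewrite ffunE. Qed.

Lemma resD X c d : res X (c + d) = res X c + res X d.
Proof. by apply/ffunP => s; rewrite !ffunE; case: ifP; rewrite ?addr0. Qed.

Lemma resB X c d : res X (c - d) = res X c - res X d.
Proof. by apply/ffunP => s; rewrite !ffunE; case: ifP; rewrite ?subr0. Qed.

Lemma supported_res X c : supported X (res X c).
Proof. by move=> s; rewrite resE; case: ifP => // _; rewrite eqxx. Qed.

Lemma res_supported X c : supported X c -> res X c = c.
Proof.
move=> hc; apply/ffunP => s; rewrite resE; case: ifP => // sX.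
by apply/esym/eqP; apply: contraFT sX => /hc.
Qed.

Lemma res_idem X c : res X (res X c) = res X c.
Proof. exact/res_supported/supported_res. Qed.

Lemma res_avoid X c : (forall s, c s != 0 -> s \notin X) -> res X c = 0.
Proof.
move=> hc; apply/ffunP => s; rewrite !ffunE; case: ifP => // sX.
by apply/eqP; apply: contraTT sX => /hc.
Qed.

Lemma hchain_supported X m c : hchain X m c -> supported X c.
Proof. by move=> hc s /hc []. Qed.

Lemma signedD (v : V) (t : {set V}) (x y : G) :
  signed v t (x + y) = signed v t x + signed v t y.
Proof. by rewrite /signed; case: ifP => _ //; rewrite opprD. Qed.

Lemma signed0 (v : V) (t : {set V}) : signed v t (0 : G) = 0.
Proof. by rewrite /signed; case: ifP; rewrite ?oppr0. Qed.

Lemma bndD c d : bnd (c + d) = bnd c + bnd d.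
Proof.
apply/ffunP => t; rewrite !ffunE; case: ifP => _; first by rewrite addr0.
by rewrite -big_split; apply: eq_bigr => v _; rewrite ffunE signedD.
Qed.

Lemma bnd0 : bnd (0 : chain V G) = 0.
Proof.
apply/ffunP => t; rewrite !ffunE; case: ifP => // _.
by apply: big1 => v _; rewrite ffunE signed0.
Qed.

Lemma face_of_res X c t : bnd (res X c) t != 0 ->
  t != set0 /\ exists2 s, s \in X & t \subset s.
Proof.
rewrite ffunE; case: (eqVneq t set0) => [->|t0]; first by rewrite eqxx.
move=> nz; split => //.
have [/exists_inP [s sX ts] | noface] := boolP [exists s in X, t \subset s].
  by exists s.
case/eqP: nz; apply: big1 => v vt; rewrite resE.
case: ifP => [vX|_]; last exact: signed0.
by case/exists_inP: noface; exists (v |: t); rewrite ?subsetUr.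
Qed.

Lemma Inf0 X m : Inf X m (0 : chain V G).
Proof. by split => s; rewrite ?bnd0 ffunE eqxx. Qed.

Lemma Inf_mono X Y m c : X \subset Y -> Inf X m c -> Inf Y m c.
Proof.
move=> /subsetP sXY [hc hb].
by split=> s nz; [have [/sXY] := hc s nz | have [/sXY] := hb s nz].
Qed.

Lemma InfD X m c d : Inf X m c -> Inf X m d -> Inf X m (c + d).
Proof.
move=> [c1 c2] [d1 d2]; split.
  move=> s; rewrite ffunE; case: (eqVneq (c s) 0) => [->|/c1 //].
  by rewrite add0r => /d1.
move=> t; rewrite bndD ffunE; case: (eqVneq (bnd c t) 0) => [->|/c2 //].
by rewrite add0r => /d2.
Qed.

Lemma cycD H n c d : cyc H n c -> cyc H n d -> cyc H n (c + d).
Proof. by move=> [hc bc] [hd bd]; split; [apply: InfD | rewrite bndD bc bd addr0]. Qed.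

Lemma bdry0 H n : bdry H n (0 : chain V G).
Proof. by exists 0; split; [apply: Inf0 | apply: bnd0]. Qed.

Lemma bdryD H n c d : bdry H n c -> bdry H n d -> bdry H n (c + d).
Proof.
move=> [c' [hc <-]] [d' [hd <-]]; exists (c' + d').
by rewrite bndD; split => //; apply: InfD.
Qed.

Lemma cyc_rcyc H X n c : cyc H n c -> rcyc H X n c.
Proof. by move=> [hc bc]; split => //; rewrite bc; apply: Inf0. Qed.

End Chains.

Definition separated_union (V : finType) (H X Y : {set {set V}}) : Prop :=
  [/\ H = X :|: Y, [disjoint X & Y] &
      forall t t', t \in X -> t' \in Y -> t :&: t' = set0].

Lemma separated_union_sym (V : finType) (H X Y : {set {set V}}) :
  separated_union H X Y -> separated_union H Y X.
Proof.
move=> [-> dXY hXY]; split; first exact: setUC.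
  by rewrite disjoint_sym.
by move=> t t' tY t'X; rewrite setIC hXY.
Qed.

Section Separated.
Variables (V : finType) (G : zmodType) (H X Y : {set {set V}}).
Hypothesis hsep : separated_union H X Y.
Implicit Types (c : chain V G).

Lemma sub_left : X \subset H.
Proof. by case: hsep => -> _ _; apply: subsetUl. Qed.

Lemma mem_split s : s \in H -> s \notin Y -> s \in X.
Proof. by case: hsep => -> _ _; rewrite in_setU => /orP[] // ->. Qed.

Lemma res_left_of_right c : supported Y c -> res X c = 0.
Proof.
case: hsep => _ dXY _ hc; apply: res_avoid => s /hc sY.
by rewrite (disjointFl dXY sY).
Qed.

Lemma res_disjoint c : res X (res Y c) = 0.
Proof. exact/res_left_of_right/supported_res. Qed.

Lemma res_split c : supported H c -> res X c + res Y c = c.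
Proof.
case: hsep => eH dXY _ hc; apply/ffunP => s; rewrite !ffunE.
case: (boolP (s \in X)) => sX; first by rewrite (disjointFr dXY sX) addr0.
rewrite add0r; case: ifP => // sY; apply/esym/eqP; apply: contraFT sY => /hc.
by rewrite eH in_setU (negbTE sX).
Qed.

Lemma no_common_face t s s' :
  t != set0 -> s \in X -> s' \in Y -> t \subset s -> t \subset s' -> False.
Proof.
case: hsep => _ _ hXY t0 sX s'Y ts ts'.
by move: t0; rewrite -subset0 -(hXY s s' sX s'Y) subsetI ts ts'.
Qed.

Lemma face_notin_right c t : bnd (res X c) t != 0 -> t \notin Y.
Proof.
case/face_of_res => t0 [s sX ts]; apply/negP => tY.
exact: (no_common_face t0 sX tY ts).
Qed.

Lemma face_notin_left c t : bnd (res Y c) t != 0 -> t \notin X.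
Proof.
case/face_of_res => t0 [s sY ts]; apply/negP => tX.
exact: (no_common_face t0 tX sY _ ts).
Qed.

Lemma bnd_res_left m c t : hchain H m c -> bnd (res X c) t != 0 ->
  bnd c t = bnd (res X c) t.
Proof.
move=> /hchain_supported hc nz; rewrite -{1}(res_split hc) bndD ffunE.
case: (eqVneq (bnd (res Y c) t) 0) => [->|nz']; first by rewrite addr0.
have [t0 [s sX ts]] := face_of_res nz; have [_ [s' sY ts']] := face_of_res nz'.
by case: (no_common_face t0 sX sY ts ts').
Qed.

Lemma res_Inf m c : Inf H m c -> Inf X m (res X c).
Proof.
move=> [hc hb]; split.
  by move=> s /[dup] /supported_res sX; rewrite resE sX => /hc [].
move=> t nz; have [tH tsize] : t \in H /\ #|t| = m.
  by apply: hb; rewrite (bnd_res_left hc nz).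
by split => //; apply: mem_split tH (face_notin_right nz).
Qed.

Lemma res_bnd m c : Inf H m c -> bnd (res X c) = res X (bnd c).
Proof.
move=> hInf; have hc := hchain_supported hInf.1.
rewrite -{2}(res_split hc) bndD resD (res_avoid (@face_notin_left c)) addr0.
by apply/esym/res_supported => t /(res_Inf hInf).2 [].
Qed.

End Separated.

Section RelativeVsAbsolute.
Variables (V : finType) (G : zmodType) (H X Y : {set {set V}}).
Hypothesis hsep : separated_union H X Y.
Implicit Types (b c : chain V G).

Lemma cyc_of_rcyc n c : rcyc H Y n c -> cyc H n (res X c).
Proof.
move=> [hc hb]; split; first exact: Inf_mono (sub_left hsep) (res_Inf hsep hc).
by rewrite (res_bnd hsep hc) (res_left_of_right hsep (hchain_supported hb.1)).
Qed.

Lemma bdry_of_rbdry n c : rbdry H Y n c -> bdry H n (res X c).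
Proof.
move=> [d [e [hd [he ->]]]]; exists (res X d).
split; first exact: Inf_mono (sub_left hsep) (res_Inf hsep hd).
rewrite resD (res_left_of_right hsep (hchain_supported he.1)) addr0.
exact: (res_bnd hsep hd).
Qed.

Lemma rbdry_of_bdry n b c :
  Inf H n c -> bdry H n b -> res Y b = res Y c -> rbdry H X n c.
Proof.
have hsep' := separated_union_sym hsep.
move=> hc [d [hd db]] eY; exists (res Y d), (res X c); split.
  exact: Inf_mono (sub_left hsep') (res_Inf hsep' hd).
split; first exact: (res_Inf hsep hc).
rewrite (res_bnd hsep' hd) db eY addrC.
by rewrite (res_split hsep (hchain_supported hc.1)).
Qed.

End RelativeVsAbsolute.

Theorem mainTheorem12 (V : finType) (G : zmodType) (H A : {set {set V}}) :
  hypergraph H ->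
  A \subset H ->
  (forall s s', s \in H -> s' \in H -> s :&: s' = set0 \/ s :&: s' \in H) ->
  (forall t t', t \in A -> t' \in H :\: A -> t :&: t' = set0) ->
  forall n : nat,
    quot_iso
      (psum (@rcyc V G H A n) (@rcyc V G H (H :\: A) n))
      (psum (@rbdry V G H A n) (@rbdry V G H (H :\: A) n))
      (@cyc V G H n) (@bdry V G H n).
Proof.
move=> _ hAH _ hdis n; set B := H :\: A.
have hAB : separated_union H A B.
  split; last exact: hdis.
    by rewrite -{1}(setID H A) (setIidPr hAH).
  by rewrite disjoints_subset; apply/subsetP => s sA; rewrite !inE sA.
have hBA := separated_union_sym hAB.
exists (fun x : chain V G * chain V G => res B x.1 + res A x.2); split.
- move=> x [x1 x2]; apply: cycD.
    exact: (cyc_of_rcyc hBA x1).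
  exact: (cyc_of_rcyc hAB x2).
- move=> x y _ _ [b1 b2]; rewrite /= opprD addrACA -!resB.
  by apply: bdryD; [exact: (bdry_of_rbdry hBA b1) | exact: (bdry_of_rbdry hAB b2)].
- by move=> x y _ _; rewrite /= !resD addrACA subrr; apply: bdry0.
- move=> [c1 c2] [[hc1 _] [hc2 _]] /= hb; split.
    apply: (rbdry_of_bdry hAB hc1 hb).
    by rewrite resD res_idem (res_disjoint hBA) addr0.
  apply: (rbdry_of_bdry hBA hc2 hb).
  by rewrite resD res_idem (res_disjoint hAB) add0r.
- move=> z hz; exists (z, z); first by split; apply: cyc_rcyc.
  rewrite /= (res_split hBA (hchain_supported hz.1.1)) subrr; exact: bdry0.
Qed.
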